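(* Let $d \in \mathbf{N}=\{1,2,\dots\}$. Then the following two statements hold. (i) For every $N \in \mathbf{N}$: a measure $\mu$ maximizes $E_\infty$ over $\mathcal{P}_N^{=}(\mathbf{S}^d)$ if and only if there exist an orthonormal basis $v_1,\dots,v_{d+1}$ of $\mathbf{R}^{d+1}$ and points $x_1,\dots,x_N \in \mathbf{S}^d$ such that $\mu = \frac{1}{N}\sum_{i=1}^N \delta_{x_i}$ and $x_i \in \{v_j,-v_j\}$ whenever $i \equiv j \pmod{d+1}$. (ii) A measure $\mu$ maximizes $E_\infty$ over $\mathcal{P}_{\mathrm{fin}}(\mathbf{S}^d)$ if and only if there exists an orthonormal basis $v_1,\dots,v_{d+1}$ of $\mathbf{R}^{d+1}$ such that $\mu = \sum_{i=1}^{d+1}(a_i\delta_{v_i} + b_i\delta_{-v_i})$ with $a_i,b_i \ge 0$ and $a_i+b_i = \frac{1}{d+1}$ for all $i=1,\dots,d+1$.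
   Context: $\mathbf{S}^d=\{x\in\mathbf{R}^{d+1}: |x|=1\}$. Define $\Lambda^\infty:\mathbf{S}^d\times\mathbf{S}^d\to\{0,1\}$ by $\Lambda^\infty(x,y)=1$ if $x\cdot y=0$ and $\Lambda^\infty(x,y)=0$ otherwise. For a finite nonnegative Borel measure $\mu$ on $\mathbf{S}^d$, $E_\infty(\mu)=\frac12\iint \Lambda^\infty(x,y)\,d\mu(x)\,d\mu(y)$. $\delta_x$ denotes the Dirac probability measure at $x$. $\mathcal{P}_N^{=}(\mathbf{S}^d)$ is the set of probability measures of the form $\frac1N\sum_{i=1}^N\delta_{x_i}$ with $x_i\in\mathbf{S}^d$ (not necessarily distinct). $\mathcal{P}_{\mathrm{fin}}(\mathbf{S}^d)$ is the set of Borel probability measures on $\mathbf{S}^d$ with finite support. *)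

From HB Require Import structures.
From mathcomp Require Import all_boot all_order all_algebra.
From mathcomp Require Import all_classical all_reals.
Set Implicit Arguments. Unset Strict Implicit. Unset Printing Implicit Defensive.
Import Order.TTheory GRing.Theory Num.Theory.
Local Open Scope classical_set_scope.
Local Open Scope ring_scope.

(* A finitely supported Borel measure mu on S^d is encoded by its
   point-mass function  w x = mu({x})  (a finite Borel measure with finite
   support is determined by these values). *)

Definition vec (R : realType) (d : nat) := 'rV[R]_(d.+1).

Definition dotv (R : realType) (d : nat) (u v : vec R d) : R :=
  \sum_(i < d.+1) u 0 i * v 0 i.

Definition sphere (R : realType) (d : nat) : set (vec R d) :=
  [set x | dotv x x = 1].

Definition orthonormal_basis (R : realType) (d : nat)
  (v : 'I_d.+1 -> vec R d) : Prop :=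
  forall i j : 'I_d.+1, dotv (v i) (v j) = (i == j)%:R.

Definition dirac_w (R : realType) (d : nat) (x : vec R d) : vec R d -> R :=
  fun y => (y == x)%:R.

Definition Lambda_inf (R : realType) (d : nat) (x y : vec R d) : R :=
  (dotv x y == 0)%:R.

(* E_infty(mu) = 1/2 \iint Lambda^infty d mu d mu, for finitely supported mu
   (sums over the finite support of w) *)
Definition E_inf (R : realType) (d : nat) (w : vec R d -> R) : R :=
  2^-1 * \sum_(x \in [set: vec R d]) \sum_(y \in [set: vec R d])
            (Lambda_inf x y * w x * w y).

Definition P_fin (R : realType) (d : nat) (w : vec R d -> R) : Prop :=
  [/\ finite_set [set x | w x != 0],
      (forall x, 0 <= w x),
      (forall x, w x != 0 -> sphere x) &
      \sum_(x \in [set: vec R d]) w x = 1].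

Definition P_N (R : realType) (d N : nat) (w : vec R d -> R) : Prop :=
  exists x : 'I_N -> vec R d,
    (forall i, sphere (x i)) /\
    w = (fun y => N%:R^-1 * \sum_(i < N) dirac_w (x i) y).

Definition maximizes (R : realType) (d : nat) (P : (vec R d -> R) -> Prop)
  (E : (vec R d -> R) -> R) (w : vec R d -> R) : Prop :=
  P w /\ forall u, P u -> E u <= E w.

From HB Require Import structures.
From mathcomp Require Import all_boot all_order all_algebra.
From mathcomp Require Import all_classical all_reals.
From mathcomp Require Import ring lra zify.
From mathcomp Require Import fingroup perm.
Set Implicit Arguments. Unset Strict Implicit. Unset Printing Implicit Defensive.
Import Order.TTheory GRing.Theory Num.Theory.
Local Open Scope classical_set_scope.
Local Open Scope ring_scope.

(* Write [2 E_inf m] as the quadratic form [Lquad s m = sum_(p,q in s) Lambda(p,q) m_p m_q]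
   over the support [s] of [m]. If two support points [u != v] are not orthogonal
   then, both being unit vectors, [Lambda] vanishes on [{u,v}^2], so [Lquad] is affine
   along [m + t (delta_u - delta_v)]: [Lquad m] is a convex combination of its values
   after moving all the mass of [v] onto [u] or all the mass of [u] onto [v]. Both
   have smaller support and keep integer masses integral, so by induction it
   suffices to treat pairwise orthogonal supports. These have at most [d+1] points
   and [Lquad = M^2 - sum m_p^2], and [sum (m_p - a)(m_p - b) >= 0] gives
   [Lquad <= M^2 - (a+b) M + (d+1) a b], with [a = b = 1/(d+1)] for probability
   measures and [a = N %/ (d+1)], [b = a + 1] for [N] counted points. Tracing the
   equality cases back through the induction, a maximiser lives on the axes [+-v_j]
   of one orthonormal basis, each axis carrying mass [a] or [b]; in (i), ordering
   the basis so that the axes of mass [b] come first indexes the points by their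
   residues mod [d+1]. *)

Section Orthonormal.
Variables (R : realType) (d : nat).
Implicit Types (u v z : vec R d) (s : seq (vec R d)).

Lemma dotvC u v : dotv u v = dotv v u.
Proof. by apply: eq_bigr => i _; rewrite mulrC. Qed.

Lemma dotvNr u v : dotv u (- v) = - dotv u v.
Proof. by rewrite /dotv -sumrN; apply: eq_bigr => i _; rewrite mxE mulrN. Qed.

Lemma dotvNl u v : dotv (- u) v = - dotv u v.
Proof. by rewrite dotvC dotvNr dotvC. Qed.

Lemma dotvZl (a : R) u v : dotv (a *: u) v = a * dotv u v.
Proof. by rewrite /dotv mulr_sumr; apply: eq_bigr => i _; rewrite mxE mulrA. Qed.

Lemma dotv_ge0 u : 0 <= dotv u u.
Proof. by apply: sumr_ge0 => i _; rewrite -expr2 sqr_ge0. Qed.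

Lemma dotv_eq0 u : (dotv u u == 0) = (u == 0).
Proof.
apply/idP/eqP => [|->]; last by rewrite /dotv big1 // => i _; rewrite mxE mul0r.
rewrite psumr_eq0 => [/allP hu|i _]; last by rewrite -expr2 sqr_ge0.
apply/rowP => i; have := hu i (mem_index_enum _).
by rewrite implyTb mulf_eq0 orbb mxE => /eqP.
Qed.

Definition mx_of_rows k (f : 'I_k -> vec R d) : 'M[R]_(k, d.+1) := \matrix_(i, j) f i 0 j.

Lemma mx_of_rows_gram k l (f : 'I_k -> vec R d) (g : 'I_l -> vec R d) i j :
  (mx_of_rows f *m (mx_of_rows g)^T) i j = dotv (f i) (g j).
Proof. by rewrite mxE; apply: eq_bigr => t _; rewrite !mxE. Qed.

Lemma row_mx_of_rows k (f : 'I_k -> vec R d) i : row i (mx_of_rows f) = f i.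
Proof. by apply/rowP => j; rewrite !mxE. Qed.

Section Basis.
Variable v : 'I_d.+1 -> vec R d.
Hypothesis hv : orthonormal_basis v.

Lemma orthonormal_basis_expand z : z = \sum_(k < d.+1) dotv z (v k) *: v k.
Proof.
have gram : mx_of_rows v *m (mx_of_rows v)^T = 1%:M.
  by apply/matrixP => i j; rewrite mx_of_rows_gram hv !mxE.
rewrite {1}(_ : z = (z *m (mx_of_rows v)^T) *m mx_of_rows v).
  rewrite mulmx_sum_row; apply: eq_bigr => k _; rewrite row_mx_of_rows.
  by congr (_ *: _); rewrite mxE; apply: eq_bigr => t _; rewrite !mxE.
by rewrite -mulmxA (mulmx1C gram) mulmx1.
Qed.

Lemma orthonormal_basis_inj : injective v.
Proof.
move=> i j e; have := hv i j; rewrite -e hv eqxx => /esym /eqP.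
by rewrite eqr_nat; case: (i =P j).
Qed.

Lemma orthonormal_basis_neq_opp i j : v i != - v j.
Proof.
apply/eqP => e; have := hv i i; rewrite {2}e dotvNr hv eqxx.
by move/eqP; rewrite eq_sym -subr_eq0 opprK -natrD pnatr_eq0.
Qed.

Definition on_axis j z := z = v j \/ z = - v j.

Lemma on_axis_unit j z : on_axis j z -> dotv z z = 1.
Proof. by case=> ->; rewrite ?dotvNl ?dotvNr ?opprK hv eqxx. Qed.

Lemma on_axis_orth i j p q : on_axis i p -> on_axis j q -> (dotv p q == 0) = (i != j).
Proof.
by case=> -> [] ->; rewrite ?dotvNl ?dotvNr ?opprK ?oppr_eq0 hv pnatr_eq0 eqb0.
Qed.

Lemma on_axis_uniq i j z : on_axis i z -> on_axis j z -> i = j.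
Proof.
move=> hi hj; apply/eqP/negPn.
by rewrite -(on_axis_orth hi hj) (on_axis_unit hi) oner_eq0.
Qed.

Lemma on_axis_opp j p q : on_axis j p -> on_axis j q -> q = p \/ q = - p.
Proof. by do 2!case=> ->; rewrite ?opprK; auto. Qed.

Lemma on_axis_indicator j k p :
  on_axis j p -> ((v k == p)%:R + (- v k == p)%:R : R) = (k == j)%:R.
Proof.
have vE : (v k == v j) = (k == j) by apply/eqP/eqP => [/orthonormal_basis_inj|->].
case=> ->; first by rewrite [- v k == _]eq_sym (negbTE (orthonormal_basis_neq_opp _ _)) addr0 vE.
by rewrite (negbTE (orthonormal_basis_neq_opp _ _)) add0r (inj_eq (@oppr_inj _)) vE.
Qed.

Lemma orthogonal_to_others_on_axis j z :
  dotv z z = 1 -> (forall k, k != j -> dotv z (v k) = 0) -> on_axis j z.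
Proof.
move=> z1 zk; set c := dotv z (v j).
have zE : z = c *: v j.
  rewrite {1}(orthonormal_basis_expand z) (bigD1 j) //= big1 ?addr0 // => k /zk ->.
  by rewrite scale0r.
have /eqP : c ^+ 2 = 1 by rewrite -z1 zE dotvZl dotvC dotvZl hv eqxx mulr1 expr2.
by rewrite sqrf_eq1 => /orP[] /eqP c1; [left|right]; rewrite zE c1 ?scale1r ?scaleN1r.
Qed.

End Basis.

Definition orthonormal_seq s :=
  uniq s /\ forall p q, p \in s -> q \in s -> dotv p q = (p == q)%:R.

Definition mx_of_seq s := mx_of_rows (fun i : 'I_(size s) => nth 0 s i).

Lemma orthonormal_seq_gram s : orthonormal_seq s -> mx_of_seq s *m (mx_of_seq s)^T = 1%:M.
Proof.
move=> [us hs]; apply/matrixP => i j.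
by rewrite mx_of_rows_gram hs ?mem_nth // nth_uniq // !mxE.
Qed.

Lemma orthonormal_seq_size s : orthonormal_seq s -> (size s <= d.+1)%N.
Proof.
move=> /orthonormal_seq_gram gram.
have := mxrankM_maxl (mx_of_seq s) (mx_of_seq s)^T.
by rewrite gram mxrank1 => /leq_trans; apply; apply: rank_leq_col.
Qed.

Lemma exists_unit_orthogonal s : orthonormal_seq s -> (size s < d.+1)%N ->
  exists z, dotv z z = 1 /\ forall p, p \in s -> dotv z p = 0.
Proof.
move=> hs hlt; set A := mx_of_seq s; set K := kermx A^T.
have [i Ki] : exists i, row i K != 0.
  apply/existsP; apply: contraTT hlt; rewrite negb_exists => /forallP K0.
  have /eqP : K = 0 by apply/row_matrixP => i; rewrite row0; apply/eqP/negPn.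
  rewrite -mxrank_eq0 mxrank_ker subn_eq0 -ltnNge ltnS => /leq_trans; apply.
  exact: rank_leq_col.
set z := row i K.
have z_orth p : p \in s -> dotv z p = 0.
  move=> sp; have /matrixP/(_ 0 (Ordinal (eq_ind_r is_true sp (index_mem p s)))) :
    z *m A^T = 0 by rewrite -row_mul mulmx_ker row0.
  rewrite !mxE => <-; apply: eq_bigr => t _; by rewrite !mxE /= nth_index.
have z_pos : 0 < dotv z z by rewrite lt_def dotv_ge0 dotv_eq0 Ki.
exists ((Num.sqrt (dotv z z))^-1 *: z); split.
  rewrite dotvZl dotvC dotvZl mulrA -expr2 exprVn sqr_sqrtr ?ltW // mulVf //.
  by rewrite gt_eqF.
by move=> p sp; rewrite dotvZl (z_orth p sp) mulr0.
Qed.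

Lemma orthonormal_seq_extend s : orthonormal_seq s ->
  exists v : 'I_d.+1 -> vec R d, orthonormal_basis v /\ forall j : 'I_d.+1, (j < size s)%N -> v j = nth 0 s j.
Proof.
move=> hs; have := orthonormal_seq_size hs.
move: {2}(d.+1 - size s)%N (erefl (d.+1 - size s)%N) => n.
elim: n s hs => [|n IH] s hs hn hle.
  have es : size s = d.+1 by apply/eqP; rewrite eqn_leq hle /= -subn_eq0 hn.
  exists (fun j => nth 0 s j); split => // i j.
  have /matrixP/(_ (cast_ord (esym es) i) (cast_ord (esym es) j)) := orthonormal_seq_gram hs.
  by rewrite mx_of_rows_gram !mxE /= (inj_eq (@cast_ord_inj _ _ _)).
have hlt : (size s < d.+1)%N by rewrite -subn_gt0 hn.
have [z [z1 zs]] := exists_unit_orthogonal hs hlt.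
have z_notin : z \notin s by apply/negP => /zs; rewrite z1 => /eqP; rewrite oner_eq0.
have hs' : orthonormal_seq (rcons s z).
  split; first by rewrite rcons_uniq z_notin hs.1.
  move=> p q; rewrite !mem_rcons !inE => /orP[/eqP->|sp] /orP[/eqP->|sq].
  - by rewrite eqxx.
  - by rewrite zs //; case: eqP => // e; move: z_notin; rewrite e sq.
  - by rewrite dotvC zs //; case: eqP => // e; move: z_notin; rewrite -e sp.
  - exact: hs.2.
have hn' : (d.+1 - size (rcons s z))%N = n by rewrite size_rcons subnS hn.
have hle' : (size (rcons s z) <= d.+1)%N by rewrite size_rcons.
have [v [hv vs]] := IH (rcons s z) hs' hn' hle'.
by exists v; split => // j js; rewrite vs ?size_rcons ?(ltn_trans js) // nth_rcons js.
Qed.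

End Orthonormal.

Lemma fsbig_setT_seq (R : realType) (T : choiceType) (f : T -> R) (r : seq T) :
  uniq r -> (forall x, x \notin r -> f x = 0) ->
  \sum_(x \in [set: T]) f x = \sum_(x <- r) f x.
Proof.
move=> ur f0; rewrite (fsbigE r) //; last by move=> i _ /f0.
by apply: eq_bigl => x; rewrite in_setT.
Qed.

Lemma big_seq_indicator (R : pzRingType) (T : eqType) (s : seq T) (F : T -> R) u :
  uniq s -> u \in s -> \sum_(q <- s) F q * (q == u)%:R = F u.
Proof.
move=> us su; rewrite (bigD1_seq u) //= eqxx mulr1 big1 ?addr0 //.
by move=> q /negbTE ->; rewrite mulr0.
Qed.

Lemma big_seq_indicator1 (R : pzRingType) (T : eqType) (s : seq T) u :
  uniq s -> u \in s -> \sum_(q <- s) ((q == u)%:R : R) = 1.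
Proof.
move=> us su; rewrite -[RHS](big_seq_indicator (fun=> 1) us su).
by apply: eq_bigr => q _; rewrite mul1r.
Qed.

Section Energy.
Variables (R : realType) (d : nat).
Implicit Types (u v p q : vec R d) (s : seq (vec R d)) (f g m : vec R d -> R).

Lemma Lambda_inf_orth u v : dotv u v = 0 -> Lambda_inf u v = 1.
Proof. by rewrite /Lambda_inf => ->; rewrite eqxx. Qed.

Lemma Lambda_inf_nonorth u v : dotv u v != 0 -> Lambda_inf u v = 0.
Proof. by rewrite /Lambda_inf => /negbTE ->. Qed.

Definition Lbil s f g := \sum_(p <- s) \sum_(q <- s) Lambda_inf p q * f p * g q.

Definition Lquad s m := Lbil s m m.

Lemma E_inf_Lquad s m : uniq s -> (forall x, x \notin s -> m x = 0) ->
  E_inf m = 2^-1 * Lquad s m.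
Proof.
move=> us m0; rewrite /E_inf /Lquad /Lbil; congr (_ * _).
rewrite (fsbig_setT_seq us); last first.
  by move=> x /m0 mx0; apply: fsbig1 => y _; rewrite mx0 mulr0 mul0r.
by apply: eq_bigr => x _; apply: fsbig_setT_seq => // y /m0 ->; rewrite mulr0.
Qed.

Lemma Lquad_supp s s' m : uniq s -> uniq s' ->
  (forall x, x \notin s -> m x = 0) -> (forall x, x \notin s' -> m x = 0) ->
  Lquad s m = Lquad s' m.
Proof.
move=> us us' m0 m0'; have := E_inf_Lquad us m0; rewrite (E_inf_Lquad us' m0').
by move/(mulfI _)->; rewrite // invr_eq0 pnatr_eq0.
Qed.

Lemma Lquad_scale s m c : Lquad s (fun y => c * m y) = c ^+ 2 * Lquad s m.
Proof.
rewrite /Lquad /Lbil mulr_sumr; apply: eq_bigr => p _; rewrite mulr_sumr.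
by apply: eq_bigr => q _; ring.
Qed.

Lemma Lquad_shift s f g t : Lquad s (fun y => f y + t * g y) =
  Lquad s f + t * (Lbil s f g + Lbil s g f) + t ^+ 2 * Lquad s g.
Proof.
rewrite /Lquad /Lbil -!big_split !mulr_sumr -!big_split /=.
apply: eq_bigr => p _; rewrite -big_split !mulr_sumr -!big_split /=.
by apply: eq_bigr => q _; ring.
Qed.

Definition dipole u v : vec R d -> R := fun y => (y == u)%:R - (y == v)%:R.

Lemma Lquad_dipole s u v : uniq s -> u \in s -> v \in s ->
  dotv u u != 0 -> dotv v v != 0 -> dotv u v != 0 -> Lquad s (dipole u v) = 0.
Proof.
move=> us su sv uu vv uv.
have row_sum p : \sum_(q <- s) Lambda_inf p q * dipole u v p * dipole u v q =
    dipole u v p * (Lambda_inf p u - Lambda_inf p v).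
  rewrite -(big_seq_indicator (Lambda_inf p) us su) -(big_seq_indicator (Lambda_inf p) us sv).
  rewrite -sumrB mulr_sumr.
  by apply: eq_bigr => q _; rewrite /dipole; ring.
rewrite /Lquad /Lbil (eq_bigr _ (fun p _ => row_sum p)).
under eq_bigr do rewrite mulrC /dipole mulrBr.
rewrite sumrB !big_seq_indicator // !Lambda_inf_nonorth // ?subrr //.
by rewrite dotvC.
Qed.

Definition transfer m u v : vec R d -> R := fun y => m y + m v * dipole u v y.

(* [Lquad] is affine along [m + t * dipole u v]; the two transfers are [t = m v]
   and [t = - m u]. *)
Lemma Lquad_transfer_avg s m u v : uniq s -> u \in s -> v \in s ->
  dotv u u != 0 -> dotv v v != 0 -> dotv u v != 0 ->
  m u * Lquad s (transfer m u v) + m v * Lquad s (transfer m v u) = (m u + m v) * Lquad s m.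
Proof.
move=> us su sv uu vv uv.
have -> : transfer m v u = (fun y => m y + (- m u) * dipole u v y).
  by apply: funext => y; rewrite /transfer /dipole; ring.
by rewrite /transfer !Lquad_shift Lquad_dipole //; ring.
Qed.

Lemma transfer_at m u v : u != v ->
  [/\ transfer m u v u = m u + m v, transfer m u v v = 0 &
      forall p, p != u -> p != v -> transfer m u v p = m p].
Proof.
rewrite /transfer /dipole => /negbTE uv; split.
- by rewrite eqxx uv /= mulr1n mulr0n; ring.
- by rewrite eqxx eq_sym uv /= mulr1n mulr0n; ring.
- by move=> p /negbTE -> /negbTE ->; rewrite mulr0n; ring.
Qed.

Definition spherical_support s m := [/\ uniq s, (forall p, p \in s -> dotv p p = 1),
  (forall p, (p \in s) = (m p != 0)) & (forall p, 0 <= m p)].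

Definition mass s m := \sum_(p <- s) m p.

Lemma spherical_support_gt0 s m p : spherical_support s m -> p \in s -> 0 < m p.
Proof. by case=> _ _ sm m0 sp; rewrite lt_def -sm sp m0. Qed.

Lemma spherical_support_out s m p : spherical_support s m -> p \notin s -> m p = 0.
Proof. by case=> _ _ sm _; rewrite sm negbK => /eqP. Qed.

Section Transfer.
Variables (s : seq (vec R d)) (m : vec R d -> R) (u v : vec R d).
Hypotheses (hs : spherical_support s m) (su : u \in s) (sv : v \in s) (uv : u != v).

Lemma transfer_support : spherical_support (rem v s) (transfer m u v).
Proof.
have [us s1 sm m0] := hs; have [tu tv tp] := transfer_at m uv.
have mu := spherical_support_gt0 hs su; have mv := spherical_support_gt0 hs sv.
split; first exact: rem_uniq.
- by move=> p /mem_rem /s1.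
- move=> p; rewrite mem_rem_uniq // inE.
  have [->|pv] := eqVneq p v; first by rewrite tv eqxx.
  have [->|pu] := eqVneq p u; first by rewrite su tu gt_eqF // addr_gt0.
  by rewrite tp // sm.
- move=> p; have [->|pv] := eqVneq p v; first by rewrite tv.
  by have [->|pu] := eqVneq p u; [rewrite tu addr_ge0 | rewrite tp].
Qed.

Lemma transfer_mass : mass (rem v s) (transfer m u v) = mass s m.
Proof.
have [us _ _ _] := hs; have [_ tv _] := transfer_at m uv.
rewrite /mass (_ : \sum_(p <- rem v s) _ = \sum_(p <- s) transfer m u v p).
  by rewrite /transfer big_split /= -mulr_sumr sumrB !big_seq_indicator1 // subrr mulr0 addr0.
by rewrite [RHS](big_rem v) //= tv add0r.
Qed.

Lemma Lquad_transfer : Lquad s (transfer m u v) = Lquad (rem v s) (transfer m u v).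
Proof.
have [us _ _ _] := hs; have [ts _ sm _] := transfer_support.
apply: Lquad_supp => //; last by move=> p; rewrite sm negbK => /eqP.
move=> p sp; apply: (spherical_support_out transfer_support).
by apply: contra sp => /mem_rem.
Qed.

End Transfer.

Definition pairwise_orthogonal s := forall p q, p \in s -> q \in s -> p != q -> dotv p q = 0.

Lemma avg_le_bound (a b x y z B : R) : 0 < a -> 0 < b ->
  a * x + b * y = (a + b) * z -> x <= B -> y <= B -> z <= B /\ (z = B -> x = B /\ y = B).
Proof.
move=> a0 b0 avg xB yB.
have gap : (a + b) * (B - z) = a * (B - x) + b * (B - y).
  by rewrite !mulrBr -avg; ring.
have ax : 0 <= a * (B - x) by apply: mulr_ge0; rewrite ?subr_ge0 // ltW.
have bx : 0 <= b * (B - y) by apply: mulr_ge0; rewrite ?subr_ge0 // ltW.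
split; first by rewrite -subr_ge0 -(pmulr_rge0 _ (addr_gt0 a0 b0)) gap addr_ge0.
move=> zB; move: gap; rewrite zB subrr mulr0 => /esym/eqP; rewrite paddr_eq0 //.
by rewrite !mulf_eq0 (gt_eqF a0) (gt_eqF b0) !subr_eq0 => /andP[/eqP-> /eqP->].
Qed.

Lemma transfer_induction (Q P : (vec R d -> R) -> Prop) (M B : R) :
  (forall m u v, Q m -> Q (transfer m u v)) ->
  (forall s m, spherical_support s m -> Q m -> mass s m = M -> pairwise_orthogonal s ->
     Lquad s m <= B /\ (Lquad s m = B -> P m)) ->
  (forall s m u v, spherical_support s m -> Q m -> u \in s -> v \in s -> u != v ->
     dotv u v != 0 -> P (transfer m u v) -> P (transfer m v u) -> P m) ->
  forall s m, spherical_support s m -> Q m -> mass s m = M ->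
    Lquad s m <= B /\ (Lquad s m = B -> P m).
Proof.
move=> Qt base merge s; elim: {s}(size s) {-2}s (erefl (size s)) => [|n IH] s sz m hs Qm Ms.
  by apply: base => // p q; move/size0nil: sz => ->.
have [[u [v [su sv uv nonorth]]]|orth] :=
  pselect (exists u v, [/\ u \in s, v \in s, u != v & dotv u v != 0]); last first.
  apply: base => // p q sp sq pq; apply/eqP/negPn/negP => pq0.
  by apply: orth; exists p, q.
have [us s1 _ _] := hs; have vu : v != u by rewrite eq_sym.
have IHt x y : x \in s -> y \in s -> x != y ->
    Lquad s (transfer m x y) <= B /\ (Lquad s (transfer m x y) = B -> P (transfer m x y)).
  move=> sx sy xy; rewrite Lquad_transfer //.
  apply: (IH (rem y s)); first by rewrite size_rem // sz.
  - exact: transfer_support.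
  - exact: Qt.
  - by rewrite transfer_mass.
have [[tuB tuP] [tvB tvP]] := (IHt u v su sv uv, IHt v u sv su vu).
have [uu vv] : dotv u u != 0 /\ dotv v v != 0 by rewrite !s1 ?oner_eq0.
have avg := Lquad_transfer_avg m us su sv uu vv nonorth.
have [mB mP] := avg_le_bound (spherical_support_gt0 hs su) (spherical_support_gt0 hs sv)
  avg tuB tvB.
split=> // /mP[/tuP Pu /tvP Pv]; exact: merge hs Qm su sv uv nonorth Pu Pv.
Qed.

Definition axis_config (P : R -> Prop) m := exists v : 'I_d.+1 -> vec R d,
  [/\ orthonormal_basis v, (forall p, m p != 0 -> exists j, on_axis v j p) &
      forall j, P (m (v j) + m (- v j))].

Section AxisTransfer.
Variables (P : R -> Prop) (s : seq (vec R d)) (m : vec R d -> R) (u v : vec R d).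
Hypotheses (hs : spherical_support s m) (su : u \in s) (sv : v \in s) (uv : u != v).
Hypothesis nonorth : dotv u v != 0.
(* Once an axis carries mass [m u + m v], every admissible axis mass is positive;
   this is what puts a support point on each axis below. *)
Hypothesis P_gt0 : forall x y, P x -> P y -> m u + m v <= x -> 0 < y.

Let mu_gt0 := spherical_support_gt0 hs su.
Let mv_gt0 := spherical_support_gt0 hs sv.

(* A support point [p] on another axis of [b] survives in [transfer m v u], whose
   basis must put [p] and [v] on different axes, as [u] is orthogonal to [p] but not to [v]. *)
Lemma transfer_axis_orthogonal (b b' : 'I_d.+1 -> vec R d) j :
  orthonormal_basis b -> (forall p, transfer m u v p != 0 -> exists j, on_axis b j p) ->
  (forall k, P (transfer m u v (b k) + transfer m u v (- b k))) -> on_axis b j u ->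
  orthonormal_basis b' -> (forall p, transfer m v u p != 0 -> exists j, on_axis b' j p) ->
  forall k, k != j -> dotv v (b k) = 0.
Proof.
move=> hb b_supp b_P uj hb' b'_supp k kj.
have vu : v != u by rewrite eq_sym.
have [_ _ _ t_ge0] := transfer_support hs su sv uv.
have [tu tv tp] := transfer_at m uv; have [t'v t'u t'p] := transfer_at m vu.
have [p [pk tp0]] : exists p, on_axis b k p /\ transfer m u v p != 0.
  have axis_pos : 0 < transfer m u v (b k) + transfer m u v (- b k).
    apply: P_gt0 (b_P j) (b_P k) _.
    by case: uj => <-; rewrite tu ?lerDl ?lerDr.
  have [bk0|] := eqVneq (transfer m u v (b k)) 0; last by exists (b k); split=> //; left.
  by rewrite bk0 add0r in axis_pos; exists (- b k); split; [right | rewrite gt_eqF].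
have pv : p != v by apply: contraNneq tp0 => ->; rewrite tv.
have pu : p != u by apply: contraNneq kj => pu; rewrite (on_axis_uniq hb pk (_ : on_axis b j p)) // pu.
have [l pl] : exists l, on_axis b' l p by apply: b'_supp; rewrite t'p // -tp.
have [l' vl'] : exists l', on_axis b' l' v by apply: b'_supp; rewrite t'v gt_eqF ?addr_gt0.
have ll' : l != l'.
  apply: contraNneq nonorth => ll'; rewrite ll' in pl.
  have up : dotv u p = 0 by apply/eqP; rewrite (on_axis_orth hb uj pk) eq_sym.
  by case: (on_axis_opp pl vl') => ->; rewrite ?dotvNr up ?oppr0.
have : dotv v p == 0 by rewrite (on_axis_orth hb' vl' pl) eq_sym.
by case: pk => ->; rewrite ?dotvNr ?oppr_eq0 => /eqP.
Qed.

Lemma axis_config_transfer :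
  axis_config P (transfer m u v) -> axis_config P (transfer m v u) -> axis_config P m.
Proof.
move=> [b [hb b_supp b_P]] [b' [hb' b'_supp _]].
have [_ s1 _ _] := hs; have [tu tv tp] := transfer_at m uv.
have [j uj] : exists j, on_axis b j u by apply: b_supp; rewrite tu gt_eqF ?addr_gt0.
have vj : on_axis b j v := orthogonal_to_others_on_axis hb (s1 v sv)
  (transfer_axis_orthogonal hb b_supp b_P uj hb' b'_supp).
exists b; split => // [p mp|k].
  have [->|pv] := eqVneq p v; first by exists j.
  have [->|pu] := eqVneq p u; first by exists j.
  by apply: b_supp; rewrite tp.
have axis_mass : transfer m u v (b k) + transfer m u v (- b k) = m (b k) + m (- b k) +
    m v * (((b k == u)%:R + (- b k == u)%:R) - ((b k == v)%:R + (- b k == v)%:R)).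
  by rewrite /transfer /dipole; ring.
have := b_P k; rewrite axis_mass.
by rewrite (on_axis_indicator hb k uj) (on_axis_indicator hb k vj) subrr mulr0 addr0.
Qed.

End AxisTransfer.

Lemma orthogonal_support_orthonormal s m :
  spherical_support s m -> pairwise_orthogonal s -> orthonormal_seq s.
Proof.
move=> [us s1 _ _] orth; split => // p q sp sq.
by have [->|pq] := eqVneq p q; [rewrite s1 | rewrite orth].
Qed.

Lemma Lquad_orthogonal s m : spherical_support s m -> pairwise_orthogonal s ->
  Lquad s m = mass s m ^+ 2 - \sum_(p <- s) m p ^+ 2.
Proof.
move=> [us s1 _ _] orth.
have row_sum p : p \in s -> \sum_(q <- s) Lambda_inf p q * m p * m q = m p * (mass s m - m p).
  move=> sp; rewrite /mass (bigD1_seq p) //= (bigD1_seq p sp us) /=.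
  rewrite Lambda_inf_nonorth ?s1 ?oner_eq0 // !mul0r add0r addrAC subrr add0r mulr_sumr.
  rewrite big_seq_cond [RHS]big_seq_cond; apply: eq_bigr => q /andP[sq qp].
  by rewrite Lambda_inf_orth ?mul1r // orth // eq_sym.
rewrite /Lquad /Lbil big_seq (eq_bigr _ row_sum) -big_seq.
by under eq_bigr do rewrite mulrBr; rewrite sumrB -mulr_suml expr2.
Qed.

Lemma orthogonal_support_basis s m : spherical_support s m -> pairwise_orthogonal s ->
  exists b : 'I_d.+1 -> vec R d, [/\ orthonormal_basis b,
    forall p, m p != 0 -> exists j, on_axis b j p,
    forall j, m (- b j) = 0,
    forall j : 'I_d.+1, (j < size s)%N -> b j \in s &
    forall j : 'I_d.+1, (size s <= j)%N -> m (b j) = 0].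
Proof.
move=> hs orth; have [us _ sm _] := hs.
have ons := orthogonal_support_orthonormal hs orth.
have [b [hb bs]] := orthonormal_seq_extend ons.
have s_b p : p \in s -> exists j : 'I_d.+1, (j < size s)%N /\ p = b j.
  move=> sp; have ps : (index p s < d.+1)%N.
    by apply: leq_trans (orthonormal_seq_size ons); rewrite index_mem.
  by exists (Ordinal ps); rewrite /= index_mem bs /= ?index_mem ?nth_index.
have m0 p : p \notin s -> m p = 0 := spherical_support_out hs.
exists b; split => //.
- by move=> p; rewrite -sm => /s_b [j [_ ->]]; exists j; left.
- move=> j; apply: m0; apply/negP => /s_b [i [_ /eqP]].
  by rewrite eq_sym (negbTE (orthonormal_basis_neq_opp hb _ _)).
- by move=> j js; rewrite bs // mem_nth.
- move=> j js; apply: m0; apply/negP => /s_b [i [si /(orthonormal_basis_inj hb) ij]].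
  by move: si; rewrite -ij ltnNge js.
Qed.

Lemma big_seq_quadratic (T : Type) (r : seq T) (f : T -> R) a b :
  \sum_(p <- r) (f p - a) * (f p - b) =
  \sum_(p <- r) f p ^+ 2 - (a + b) * \sum_(p <- r) f p + (size r)%:R * (a * b).
Proof.
elim: r => [|x r IH]; first by rewrite !big_nil mul0r; ring.
by rewrite !big_cons IH /= mulrS; ring.
Qed.

Definition orth_bound (M a b : R) := M ^+ 2 - (a + b) * M + (d.+1)%:R * (a * b).

Definition two_valued (a b x : R) := x = a \/ x = b.

Lemma orthogonal_support_le s m (M a b : R) :
  spherical_support s m -> pairwise_orthogonal s -> mass s m = M ->
  0 <= a * b -> (forall p, 0 <= (m p - a) * (m p - b)) ->
  Lquad s m <= orth_bound M a b /\
  (Lquad s m = orth_bound M a b -> axis_config (two_valued a b) m).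
Proof.
move=> hs orth Ms ab0 quad0.
have [b' [hb supp neg0 bs b0]] := orthogonal_support_basis hs orth.
have size_le : (size s <= d.+1)%N.
  exact/orthonormal_seq_size/(orthogonal_support_orthonormal hs orth).
set D := \sum_(p <- s) (m p - a) * (m p - b).
have D0 : 0 <= D by apply: sumr_ge0.
have size_ab : (size s)%:R * (a * b) <= (d.+1)%:R * (a * b) by rewrite ler_wpM2r // ler_nat.
have LE : Lquad s m = orth_bound M a b - D - ((d.+1)%:R - (size s)%:R) * (a * b).
  by rewrite /D big_seq_quadratic -/(mass s m) (Lquad_orthogonal hs orth) Ms /orth_bound; ring.
split=> [|eqB]; first by rewrite LE; lra.
have [D_eq0 ab_eq] : D = 0 /\ (size s)%:R * (a * b) = (d.+1)%:R * (a * b).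
  by move: eqB; rewrite LE; lra.
have two_s p : p \in s -> two_valued a b (m p).
  move: D_eq0 => /eqP; rewrite psumr_eq0 // => /allP/(_ p) + sp => /(_ sp).
  by rewrite mulf_eq0 !subr_eq0 => /orP[] /eqP; [left | right].
exists b'; split=> // j; rewrite neg0 addr0.
have [js|sj] := ltnP j (size s); first exact/two_s/bs.
have : a * b == 0.
  apply: contraTT sj => /mulIf/(_ _ _ ab_eq)/eqP; rewrite eqr_nat => /eqP ->.
  by rewrite -ltnNge.
by rewrite b0 // mulf_eq0 => /orP[] /eqP ->; [left | right].
Qed.

Lemma Lquad_le_orth_bound (Q : (vec R d -> R) -> Prop) (M a b : R) :
  (forall m u v, Q m -> Q (transfer m u v)) ->
  (forall m p, Q m -> 0 <= (m p - a) * (m p - b)) -> 0 <= a * b ->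
  (forall m u v x y, Q m -> 0 < m u -> 0 < m v -> two_valued a b x -> two_valued a b y ->
     m u + m v <= x -> 0 < y) ->
  forall s m, spherical_support s m -> Q m -> mass s m = M ->
    Lquad s m <= orth_bound M a b /\
    (Lquad s m = orth_bound M a b -> axis_config (two_valued a b) m).
Proof.
move=> Qt quad ab0 pos; apply: transfer_induction => //.
  by move=> s m hs Qm Ms orth; apply: orthogonal_support_le => // p; apply: quad.
move=> s m u v hs Qm su sv uv nonorth; apply: (axis_config_transfer hs su sv uv nonorth).
by move=> x y; apply: pos; rewrite ?(spherical_support_gt0 hs).
Qed.

Definition axes_seq (b : 'I_d.+1 -> vec R d) :=
  [seq b j | j <- index_enum 'I_d.+1] ++ [seq - b j | j <- index_enum 'I_d.+1].

Lemma axes_seq_uniq b : orthonormal_basis b -> uniq (axes_seq b).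
Proof.
move=> hb; rewrite cat_uniq !map_inj_uniq ?index_enum_uniq //=.
- rewrite andbT; apply/hasPn => p /mapP [j _ ->]; apply/mapP => [[i _ /eqP]].
  by rewrite eq_sym (negbTE (orthonormal_basis_neq_opp hb i j)).
- by move=> i j /oppr_inj /(orthonormal_basis_inj hb).
- exact: orthonormal_basis_inj.
Qed.

Lemma axes_seq_out b m : (forall p, m p != 0 -> exists j, on_axis b j p) ->
  forall x, x \notin axes_seq b -> m x = 0.
Proof.
move=> supp x; apply: contraNeq => /supp [j [->|->]]; rewrite mem_cat.
  by apply/orP; left; apply/mapP; exists j; rewrite ?mem_index_enum.
by apply/orP; right; apply/mapP; exists j; rewrite ?mem_index_enum.
Qed.

Lemma mass_supp s s' m : uniq s -> uniq s' ->
  (forall x, x \notin s -> m x = 0) -> (forall x, x \notin s' -> m x = 0) ->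
  mass s m = mass s' m.
Proof.
by move=> us us' m0 m0'; rewrite /mass -(fsbig_setT_seq us m0) -(fsbig_setT_seq us' m0').
Qed.

Section AxisMeasure.
Variables (b : 'I_d.+1 -> vec R d) (m : vec R d -> R).
Hypotheses (hb : orthonormal_basis b) (supp : forall p, m p != 0 -> exists j, on_axis b j p).

Let L j := m (b j) + m (- b j).

Lemma mass_axes : mass (axes_seq b) m = \sum_(j < d.+1) L j.
Proof. by rewrite /mass big_cat /= !big_map -big_split. Qed.

(* A point on axis [j] is orthogonal exactly to the points on the other axes. *)
Lemma Lquad_axes : Lquad (axes_seq b) m = (\sum_(j < d.+1) L j) ^+ 2 - \sum_(j < d.+1) L j ^+ 2.
Proof.
have row_sum j p : on_axis b j p ->
    \sum_(q <- axes_seq b) Lambda_inf p q * m p * m q = m p * (\sum_(k < d.+1) L k - L j).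
  move=> pj; rewrite big_cat /= !big_map -big_split /= (bigD1 j) //= (bigD1 j (P := predT)) //=.
  have Lam k : Lambda_inf p (b k) = (j != k)%:R /\ Lambda_inf p (- b k) = (j != k)%:R.
    by rewrite /Lambda_inf (on_axis_orth hb pj (or_introl erefl))
      (on_axis_orth hb pj (or_intror erefl)).
  have [-> ->] := Lam j; rewrite eqxx /= !mulr0n !mul0r !add0r.
  rewrite /L addrAC subrr add0r mulr_sumr; apply: eq_bigr => k jk.
  by have [-> ->] := Lam k; rewrite eq_sym jk !mul1r; ring.
rewrite /Lquad /Lbil big_cat /= !big_map.
rewrite (eq_bigr _ (fun j _ => row_sum j _ (or_introl erefl))).
rewrite [X in _ + X](eq_bigr _ (fun j _ => row_sum j _ (or_intror erefl))).
rewrite -big_split /= (eq_bigr (fun j => L j * (\sum_(k < d.+1) L k) - L j ^+ 2)).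
  by rewrite sumrB -mulr_suml expr2.
by move=> j _; rewrite /L; ring.
Qed.

End AxisMeasure.

Lemma orth_bound_two_valued (L : 'I_d.+1 -> R) (M a b : R) :
  (forall j, two_valued a b (L j)) -> \sum_(j < d.+1) L j = M ->
  M ^+ 2 - \sum_(j < d.+1) L j ^+ 2 = orth_bound M a b.
Proof.
move=> Lab LM; have : \sum_(j < d.+1) (L j - a) * (L j - b) = 0.
  by apply: big1 => j _; case: (Lab j) => ->; rewrite subrr ?mul0r ?mulr0.
rewrite (eq_bigr (fun j => L j ^+ 2 - (a + b) * L j + a * b)) => [|j _]; last by ring.
rewrite big_split sumrB /= -mulr_sumr sumr_const card_ord -mulr_natl LM /orth_bound.
by move=> h; lra.
Qed.

Lemma Lquad_axis_config s m (M a b : R) : uniq s -> (forall x, x \notin s -> m x = 0) ->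
  mass s m = M -> axis_config (two_valued a b) m -> Lquad s m = orth_bound M a b.
Proof.
move=> us m0 Ms [b' [hb supp Lab]].
have [ua m0a] := (axes_seq_uniq hb, axes_seq_out supp).
rewrite (Lquad_supp us ua m0 m0a) Lquad_axes // -mass_axes // -(mass_supp us ua m0 m0a) Ms.
by apply: orth_bound_two_valued => //; rewrite -mass_axes // -(mass_supp us ua m0 m0a).
Qed.

Local Notation c := ((d.+1)%:R^-1 : R).

Lemma Lquad_probability_le s m : spherical_support s m -> mass s m = 1 ->
  Lquad s m <= orth_bound 1 c c /\ (Lquad s m = orth_bound 1 c c -> axis_config (two_valued c c) m).
Proof.
move=> hs Ms; apply: (@Lquad_le_orth_bound (fun=> True)) hs I Ms => //.
- by move=> m' p _; rewrite -expr2 sqr_ge0.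
- by rewrite mulr_ge0 // invr_ge0.
- by move=> m' u v x y _ _ _ _ [] ->; rewrite invr_gt0 ltr0n.
Qed.

Definition nat_valued (m : vec R d -> R) := forall p, exists n : nat, m p = n%:R.

Lemma nat_valued_transfer m u v : nat_valued m -> nat_valued (transfer m u v).
Proof.
move=> mN y; rewrite /transfer /dipole.
have [->|yu] := eqVneq y u.
  have [<-|uv] := eqVneq u v; first by rewrite subrr mulr0 addr0.
  have [[k ->] [l ->]] := (mN u, mN v).
  by exists (k + l)%N; rewrite mulr1n mulr0n subr0 mulr1 natrD.
have [->|yv] := eqVneq y v; first by exists 0%N; rewrite /= mulr0n mulr1n sub0r mulrN1 subrr.
by rewrite mulr0n subrr mulr0 addr0.
Qed.

Lemma natr_quadratic_ge0 (n q : nat) : 0 <= (n%:R - q%:R) * (n%:R - q.+1%:R) :> R.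
Proof.
have [nq|qn] := leqP n q.
  by apply: mulr_le0; rewrite subr_le0 ler_nat // (leq_trans nq).
by apply: mulr_ge0; rewrite subr_ge0 ler_nat // ltnW.
Qed.

Lemma Lquad_counting_le (N : nat) s m :
  spherical_support s m -> nat_valued m -> mass s m = N%:R ->
  let q := (N %/ d.+1)%N in
  Lquad s m <= orth_bound N%:R q%:R q.+1%:R /\
  (Lquad s m = orth_bound N%:R q%:R q.+1%:R -> axis_config (two_valued q%:R q.+1%:R) m).
Proof.
move=> hs mN Ms q; apply: (Lquad_le_orth_bound nat_valued_transfer) hs mN Ms => //.
- by move=> m' p /(_ p)[n ->]; apply: natr_quadratic_ge0.
- by rewrite mulr_ge0.
move=> m' u v x y m'N; have [[k ->] [l ->]] := (m'N u, m'N v).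
rewrite !ltr0n => k0 l0 hx hy le_x.
have two_le_x : 2%:R <= x by apply: le_trans le_x; rewrite -natrD ler_nat -(addn1 1) leq_add.
have q0 : (0 < q)%N by case: hx two_le_x => ->; rewrite ler_nat; lia.
by case: hy => ->; rewrite ltr0n // ltnW.
Qed.

End Energy.

Section FiniteSupport.
Variables (R : realType) (d : nat).
Local Notation c := ((d.+1)%:R^-1 : R).

Lemma exists_orthonormal_basis : exists v : 'I_d.+1 -> vec R d, orthonormal_basis v.
Proof.
have [|v [hv _]] := @orthonormal_seq_extend R d [::]; last by exists v.
by split=> // p q; rewrite in_nil.
Qed.

Lemma P_fin_spherical_support (w : vec R d -> R) : P_fin w ->
  exists s, [/\ spherical_support s w, mass s w = 1 & E_inf w = 2^-1 * Lquad s w].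
Proof.
case=> /finite_seqP[s0 s0E] w0 w_sphere w1.
have s0w p : (p \in s0) = (w p != 0).
  apply/idP/idP => h; first by have : [set` s0] p by []; rewrite -s0E.
  by have : [set x | w x != 0] p by []; rewrite s0E.
have out x : x \notin undup s0 -> w x = 0 by rewrite mem_undup s0w negbK => /eqP.
exists (undup s0); split.
- split=> //; first exact: undup_uniq.
  + by move=> p; rewrite mem_undup s0w => /w_sphere.
  + by move=> p; rewrite mem_undup s0w.
- by rewrite /mass -(fsbig_setT_seq (undup_uniq s0) out).
- exact: E_inf_Lquad (undup_uniq s0) out.
Qed.

Lemma E_inf_P_fin_le (w : vec R d -> R) : P_fin w ->
  E_inf w <= 2^-1 * orth_bound d 1 c c /\
  (E_inf w = 2^-1 * orth_bound d 1 c c -> axis_config (two_valued c c) w).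
Proof.
move=> /P_fin_spherical_support[s [hs ws ->]].
have [le eq] := Lquad_probability_le hs ws.
rewrite ler_pM2l ?invr_gt0 ?ltr0n //; split=> // /(mulfI _) eqB; apply: eq.
by apply: eqB; rewrite invr_eq0 pnatr_eq0.
Qed.

Section AxisMeasure.
Variables (v : 'I_d.+1 -> vec R d) (a b : 'I_d.+1 -> R).
Hypothesis hv : orthonormal_basis v.

Definition axis_measure : vec R d -> R :=
  fun y => \sum_(i < d.+1) (a i * dirac_w (v i) y + b i * dirac_w (- v i) y).

Lemma axis_measure_pos j : axis_measure (v j) = a j.
Proof.
rewrite /axis_measure /dirac_w (bigD1 j) //= eqxx (negbTE (orthonormal_basis_neq_opp hv _ _)).
rewrite big1 ?mulr0 ?addr0 ?mulr1 // => i ij.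
rewrite (inj_eq (orthonormal_basis_inj hv)) [j == _]eq_sym (negbTE ij).
by rewrite (negbTE (orthonormal_basis_neq_opp hv _ _)) !mulr0 addr0.
Qed.

Lemma axis_measure_neg j : axis_measure (- v j) = b j.
Proof.
rewrite /axis_measure /dirac_w (bigD1 j) //= eqxx eq_sym.
rewrite (negbTE (orthonormal_basis_neq_opp hv _ _)) big1 ?mulr0 ?add0r ?mulr1 ?addr0 // => i ij.
rewrite (inj_eq (@oppr_inj _)) (inj_eq (orthonormal_basis_inj hv)) [j == _]eq_sym (negbTE ij).
rewrite eq_sym.
by rewrite (negbTE (orthonormal_basis_neq_opp hv _ _)) !mulr0 addr0.
Qed.

Lemma axis_measure_supp p : axis_measure p != 0 -> exists j, on_axis v j p.
Proof.
apply: contraNP => no_axis; rewrite /axis_measure /dirac_w big1 // => i _.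
have [pv|pv] := eqVneq p (v i); first by case: no_axis; exists i; left.
have [pnv|pnv] := eqVneq p (- v i); first by case: no_axis; exists i; right.
by rewrite !mulr0 addr0.
Qed.

End AxisMeasure.

Lemma axis_measureE (v : 'I_d.+1 -> vec R d) (m : vec R d -> R) : orthonormal_basis v ->
  (forall p, m p != 0 -> exists j, on_axis v j p) ->
  m = axis_measure v (fun j => m (v j)) (fun j => m (- v j)).
Proof.
move=> hv supp; apply: funext => y.
have [[j [->|->]]|no_axis] := pselect (exists j, on_axis v j y).
- by rewrite axis_measure_pos.
- by rewrite axis_measure_neg.
have -> : m y = 0 by apply/eqP/negPn/negP => /supp.
by apply/esym/eqP/negPn/negP => /axis_measure_supp.
Qed.

Lemma axis_measure_perm (v : 'I_d.+1 -> vec R d) (a b : 'I_d.+1 -> R) (s : 'S_d.+1) :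
  axis_measure (v \o s) (a \o s) (b \o s) = axis_measure v a b.
Proof.
apply: funext => y; rewrite /axis_measure [RHS](reindex_inj (@perm_inj _ s)).
by apply: eq_bigr.
Qed.

Lemma axis_measure_P_fin (v : 'I_d.+1 -> vec R d) (a b : 'I_d.+1 -> R) :
  orthonormal_basis v -> (forall i, 0 <= a i /\ 0 <= b i) -> (forall i, a i + b i = c) ->
  P_fin (axis_measure v a b) /\ E_inf (axis_measure v a b) = 2^-1 * orth_bound d 1 c c.
Proof.
move=> hv ab0 abc; set w := axis_measure v a b.
have supp := @axis_measure_supp v a b.
have [ua out] := (axes_seq_uniq hv, axes_seq_out supp).
have axis j : w (v j) + w (- v j) = c by rewrite /w axis_measure_pos // axis_measure_neg.
have mass1 : mass (axes_seq v) w = 1.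
  rewrite mass_axes // (eq_bigr _ (fun j _ => axis j)) sumr_const card_ord.
  by rewrite -(mulr_natl c) mulfV // pnatr_eq0.
split; last first.
  rewrite (E_inf_Lquad ua out) (@Lquad_axis_config _ _ _ _ _ c c ua out mass1) //.
  by exists v; split=> // j; left.
split.
- apply: sub_finite_set (finite_seq (axes_seq v)) => p /= wp.
  by apply: contraNT wp => /out/eqP.
- move=> y; apply: sumr_ge0 => i _.
  by have [a0 b0] := ab0 i; rewrite addr_ge0 // mulr_ge0 // ler0n.
- by move=> x /supp[j /(on_axis_unit hv)].
- by rewrite (fsbig_setT_seq ua out).
Qed.

Lemma P_fin_maximizers (w : vec R d -> R) :
  maximizes (@P_fin R d) (@E_inf R d) w <->
  exists (v : 'I_d.+1 -> vec R d) (a b : 'I_d.+1 -> R),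
    [/\ orthonormal_basis v, (forall i, 0 <= a i /\ 0 <= b i), (forall i, a i + b i = c) &
        w = axis_measure v a b].
Proof.
split=> [[Pw w_max]|[v [a [b [hv ab0 abc ->]]]]]; last first.
  have [P E] := axis_measure_P_fin hv ab0 abc.
  by split=> // u /E_inf_P_fin_le[le _]; rewrite E.
have [v0 hv0] := exists_orthonormal_basis.
have c0 : 0 <= c by rewrite invr_ge0.
have [P0 E0] := @axis_measure_P_fin v0 (fun=> c) (fun=> 0) hv0 (fun=> conj c0 (lexx 0))
  (fun=> addr0 c).
have [le eq] := E_inf_P_fin_le Pw.
have ge : 2^-1 * orth_bound d 1 c c <= E_inf w by rewrite -E0; apply: w_max.
have [b [hb supp axis]] := eq (le_anti (introT andP (conj le ge))).
exists b, (fun j => w (b j)), (fun j => w (- b j)); split.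
- exact: hb.
- by have [_ w0 _ _] := Pw; move=> i; rewrite !w0.
- by move=> i; case: (axis i).
- exact: axis_measureE.
Qed.

End FiniteSupport.

Lemma divn_modn_succ (n N : nat) : (0 < n)%N ->
  (N.+1 %/ n = N %/ n + ((N %% n).+1 == n))%N /\
  (N.+1 %% n = if (N %% n).+1 == n then 0 else (N %% n).+1)%N.
Proof.
move=> n0; have NE : N.+1 = (N %/ n * n + (N %% n).+1)%N by rewrite {1}(divn_eq N n) addnS.
case: eqP => r1.
  by rewrite NE r1 -mulSnr mulnK // modnMl addn1.
have lt : ((N %% n).+1 < n)%N by rewrite ltn_neqAle ltn_pmod // andbT; apply/eqP.
by rewrite NE divnMDl // (divn_small lt) modnMDl (modn_small lt) !addn0.
Qed.

Lemma sum_mod_eq (n N j : nat) : (0 < n)%N -> (j < n)%N ->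
  (\sum_(i < N) (i %% n == j) = N %/ n + (j < N %% n))%N.
Proof.
move=> n0 jn; elim: N => [|N IH]; first by rewrite big_ord0 div0n mod0n.
rewrite big_ord_recr /= IH; have [-> ->] := divn_modn_succ N n0.
have := ltn_pmod N n0; set r := (N %% n)%N.
by case: (r.+1 =P n) => rn; case: (ltngtP j r) => jr; rewrite /= ?eqxx //;
  try (have -> : (r == j) = false by apply/negbTE; rewrite neq_ltn jr ?orbT); lia.
Qed.

Lemma sum_mod_eq_div_lt (n N j a : nat) : (0 < n)%N -> (j < n)%N ->
  (\sum_(i < N) ((i %% n == j) && (i %/ n < a)) = minn a (\sum_(i < N) (i %% n == j)))%N.
Proof.
move=> n0 jn; elim: N => [|N IH]; first by rewrite !big_ord0 minn0.
rewrite !big_ord_recr /= IH; case: eqP => [Nj|_] /=; last by rewrite !addn0.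
rewrite (sum_mod_eq N n0 jn) -Nj ltnn addn0.
by case: (ltnP (N %/ n) a) => Na /=; rewrite /minn; case: ltnP; case: ltnP; lia.
Qed.

Lemma sum_andbN (N : nat) (P Q : 'I_N -> bool) :
  (\sum_(i < N) (P i && ~~ Q i) = \sum_(i < N) P i - \sum_(i < N) (P i && Q i))%N.
Proof.
rewrite [X in (_ = X - _)%N](_ : _ = \sum_(i < N) (P i && Q i) + \sum_(i < N) (P i && ~~ Q i))%N.
  by rewrite addKn.
by rewrite -big_split /=; apply: eq_bigr => i _; case: (P i); case: (Q i).
Qed.

(* Listing first the [j] with [L j = N %/ n.+1 + 1] matches [L] with the sizes of
   the residue classes mod [n.+1], exactly [N %% n.+1] of which are that large. *)
Lemma balanced_perm (n N : nat) (L : 'I_n.+1 -> nat) :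
  (forall j, L j = N %/ n.+1 \/ L j = (N %/ n.+1).+1)%N -> (\sum_j L j = N)%N ->
  exists s : 'S_n.+1, forall i : 'I_n.+1, L (s i) = (\sum_(k < N) (k %% n.+1 == i))%N.
Proof.
move=> Lq LN; set q := (N %/ n.+1)%N in Lq; set S := [set j | L j == q.+1]%SET.
have LE : (\sum_j L j = q * n.+1 + #|S|)%N.
  rewrite (eq_bigr (fun j => q + (j \in S))%N) => [|j _]; last first.
    by rewrite finset.inE; case: (Lq j) => ->; rewrite ?eqxx ?addn1 // (ltn_eqF (ltnSn q)) addn0.
  rewrite big_split /= sum_nat_const card_ord mulnC -sum1_card [in RHS]big_mkcond /=.
  by congr (_ + _)%N; apply: eq_bigr => j _; case: (j \in S).
have S_lt : (#|S| < n.+1)%N.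
  rewrite ltn_neqAle -[X in (_ <= X)%N]card_ord max_card andbT; apply/eqP => Sn.
  by move: (ltnSn q); rewrite {1}/q -LN LE Sn -mulSnr mulnK // ltnn.
have NS : (N %% n.+1 = #|S|)%N by rewrite -LN LE modnMDl modn_small.
set r := enum S ++ enum (~: S)%SET.
have r_size : size r = n.+1 by rewrite size_cat -!cardE cardsC card_ord.
have r_inj : injective (fun i : 'I_n.+1 => nth ord0 r i).
  move=> i j /eqP; rewrite nth_uniq ?r_size // => [/eqP/val_inj //|].
  by rewrite cat_uniq !enum_uniq andbT /=; apply/hasPn => j'; rewrite !mem_enum finset.in_setC.
exists (perm r_inj) => i; rewrite permE sum_mod_eq // NS -/q.
have : (nth ord0 r i \in S) = (i < #|S|)%N.
  rewrite nth_cat -cardE; case: ifP => iS; first by rewrite -mem_enum mem_nth // -cardE.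
  have : (i - #|S| < size (enum (~: S)%SET))%N.
    by rewrite -cardE -(ltn_add2l #|S|) cardsC card_ord subnKC // leqNgt iS.
  by move/(mem_nth ord0); rewrite mem_enum finset.in_setC => /negbTE.
rewrite finset.inE; case: (ltnP i #|S|) => _ /=; first by move/eqP ->; rewrite addn1.
by rewrite addn0; case: (Lq (nth ord0 r i)) => // ->; rewrite eqxx.
Qed.

Section Counting.
Variables (R : realType) (d N : nat).
Implicit Types (x : 'I_N -> vec R d) (v : 'I_d.+1 -> vec R d).
Local Notation q := (N %/ d.+1)%N.
Local Notation bound := (orth_bound d N%:R q%:R q.+1%:R).

Definition counting x : vec R d -> R := fun y => \sum_(i < N) dirac_w (x i) y.

Definition point_seq x := undup [seq x i | i <- index_enum 'I_N].

Lemma countingE x y : counting x y = (\sum_(i < N) (y == x i))%:R.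
Proof. by rewrite natr_sum. Qed.

Lemma mem_point_seq x p : (p \in point_seq x) = (counting x p != 0).
Proof.
rewrite mem_undup countingE pnatr_eq0 sum_nat_eq0 negb_forall; apply/mapP/existsP.
  by case=> i _ ->; exists i; rewrite eqxx.
by case=> i; rewrite implyTb eqb0 negbK => /eqP ->; exists i; rewrite ?mem_index_enum.
Qed.

Lemma counting_support x : (forall i, sphere (x i)) ->
  [/\ spherical_support (point_seq x) (counting x), nat_valued (counting x) &
      mass (point_seq x) (counting x) = N%:R].
Proof.
move=> x1; split.
- split=> [|p||p]; first exact: undup_uniq.
  + by rewrite mem_undup => /mapP[i _ ->]; apply: x1.
  + exact: mem_point_seq.
  + by apply: sumr_ge0 => i _; rewrite ler0n.
- by move=> p; rewrite countingE; eexists.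
- rewrite /mass /counting exchange_big /= (eq_bigr (fun=> 1)) ?sumr_const ?card_ord //.
  move=> i _; apply: big_seq_indicator1; first exact: undup_uniq.
  by rewrite mem_undup map_f ?mem_index_enum.
Qed.

Lemma E_inf_P_N x : (forall i, sphere (x i)) ->
  E_inf (fun y => N%:R^-1 * counting x y) =
  2^-1 * (N%:R^-1 ^+ 2 * Lquad (point_seq x) (counting x)).
Proof.
move=> x1; have [[us _ sm _] _ _] := counting_support x1.
rewrite (E_inf_Lquad us) ?Lquad_scale // => y.
by rewrite sm negbK => /eqP ->; rewrite mulr0.
Qed.

Lemma E_inf_P_N_le x : (0 < N)%N -> (forall i, sphere (x i)) ->
  E_inf (fun y => N%:R^-1 * counting x y) <= 2^-1 * (N%:R^-1 ^+ 2 * bound) /\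
  (E_inf (fun y => N%:R^-1 * counting x y) = 2^-1 * (N%:R^-1 ^+ 2 * bound) ->
   axis_config (two_valued q%:R q.+1%:R) (counting x)).
Proof.
move=> N0 x1; have [hs xN xM] := counting_support x1.
have [le eq] := Lquad_counting_le hs xN xM.
have [h0 n0] : 0 < 2^-1 :> R /\ 0 < N%:R^-1 ^+ 2 :> R by rewrite exprn_gt0 ?invr_gt0 ?ltr0n.
rewrite E_inf_P_N // !ler_pM2l //; split=> // /(mulfI (lt0r_neq0 h0))/(mulfI (lt0r_neq0 n0)).
exact: eq.
Qed.

Definition ord_mod (i : 'I_N) : 'I_d.+1 := Ordinal (ltn_pmod i (ltn0Sn d)).

Definition residue_count (j : 'I_d.+1) := (\sum_(i < N) (i %% d.+1 == j))%N.

Lemma residue_count_two_valued j : residue_count j = q \/ residue_count j = q.+1.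
Proof.
by rewrite /residue_count sum_mod_eq //; case: (_ < _)%N; rewrite ?addn0 ?addn1; [right|left].
Qed.

Lemma residue_config_Lquad x v : orthonormal_basis v ->
  (forall (i : 'I_N) (j : 'I_d.+1), (i %% d.+1)%N = j -> x i = v j \/ x i = - v j) ->
  (forall i, sphere (x i)) /\ Lquad (point_seq x) (counting x) = bound.
Proof.
move=> hv x_res; have x_axis i : on_axis v (ord_mod i) (x i) by apply: x_res.
have x1 i : sphere (x i) := on_axis_unit hv (x_axis i).
have [[us _ sm _] _ xM] := counting_support x1.
have out y : y \notin point_seq x -> counting x y = 0 by rewrite sm negbK => /eqP.
split=> //; apply: (Lquad_axis_config us out xM).
exists v; split=> // [p|j].
  by rewrite -mem_point_seq mem_undup => /mapP[i _ ->]; exists (ord_mod i).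
have -> : counting x (v j) + counting x (- v j) = (residue_count j)%:R.
  rewrite /counting -big_split natr_sum; apply: eq_bigr => i _.
  by rewrite /= /dirac_w (on_axis_indicator hv j (x_axis i)) eq_sym.
by case: (residue_count_two_valued j) => ->; [left | right].
Qed.

Definition residue_assign v (A : 'I_d.+1 -> nat) (i : 'I_N) : vec R d :=
  if (i %/ d.+1 < A (ord_mod i))%N then v (ord_mod i) else - v (ord_mod i).

Lemma residue_assign_on_axis v A i : on_axis v (ord_mod i) (residue_assign v A i).
Proof. by rewrite /residue_assign; case: ifP; [left | right]. Qed.

Lemma counting_residue_assign v (A : 'I_d.+1 -> nat) : orthonormal_basis v ->
  (forall j, A j <= residue_count j)%N ->
  counting (residue_assign v A) =
  axis_measure v (fun j => (A j)%:R) (fun j => (residue_count j - A j)%:R).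
Proof.
move=> hv A_le; set x' := residue_assign v A.
have vE a b : (v a == v b) = (a == b) := inj_eq (orthonormal_basis_inj hv) a b.
have vN a b : (v a == - v b) = false := negbTE (orthonormal_basis_neq_opp hv a b).
have Nv a b : (- v a == v b) = false by rewrite eq_sym vN.
have NN a b : (- v a == - v b) = (a == b) by rewrite (inj_eq (@oppr_inj _)) vE.
have x'E j i : (v j == x' i) = ((i %% d.+1 == j) && (i %/ d.+1 < A j))%N /\
    (- v j == x' i) = ((i %% d.+1 == j) && ~~ (i %/ d.+1 < A j))%N.
  rewrite /x' /residue_assign; have [<-|ij] := eqVneq (ord_mod i) j.
    have -> : (i %% d.+1 == ord_mod i)%N by [].
    by case: ifP; rewrite ?vE ?vN ?Nv ?NN eqxx.
  have -> : (i %% d.+1 == j)%N = false by apply: contraNF ij => /eqP ij; apply/eqP/val_inj.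
  have ji : (j == ord_mod i) = false by rewrite eq_sym (negbTE ij).
  by case: ifP; rewrite ?vE ?vN ?Nv ?NN ji.
have supp p : counting x' p != 0 -> exists j, on_axis v j p.
  by rewrite -mem_point_seq mem_undup => /mapP[i _ ->]; exists (ord_mod i); apply: residue_assign_on_axis.
rewrite {1}(axis_measureE hv supp); congr axis_measure; apply: funext => j; rewrite countingE.
  rewrite (eq_bigr _ (fun i _ => congr1 nat_of_bool (x'E j i).1)).
  by rewrite sum_mod_eq_div_lt // (minn_idPl (A_le j)).
rewrite (eq_bigr _ (fun i _ => congr1 nat_of_bool (x'E j i).2)).
by rewrite sum_andbN sum_mod_eq_div_lt // (minn_idPl (A_le j)).
Qed.

End Counting.

Section Residues.
Variables (R : realType) (d N : nat).
Local Notation q := (N %/ d.+1)%N.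
Local Notation bound := (orth_bound d N%:R q%:R q.+1%:R).

Lemma axis_config_residue (x : 'I_N -> vec R d) : (forall i, sphere (x i)) ->
  axis_config (two_valued q%:R q.+1%:R) (counting x) ->
  exists (v : 'I_d.+1 -> vec R d) (x' : 'I_N -> vec R d), [/\ orthonormal_basis v,
    forall (i : 'I_N) (j : 'I_d.+1), (i %% d.+1)%N = j -> x' i = v j \/ x' i = - v j &
    counting x' = counting x].
Proof.
move=> x1 [b [hb supp Lq]].
pose L j := (\sum_(i < N) (b j == x i) + \sum_(i < N) (- b j == x i))%N.
have LE j : (L j)%:R = counting x (b j) + counting x (- b j) by rewrite natrD !countingE.
have L_two j : L j = q \/ L j = q.+1.
  by case: (Lq j); rewrite -LE => /eqP; rewrite eqr_nat => /eqP; [left | right].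
have L_sum : (\sum_j L j = N)%N.
  have [[us _ sm _] _ xM] := counting_support x1.
  have out y : y \notin point_seq x -> counting x y = 0 by rewrite sm negbK => /eqP.
  apply/eqP; rewrite -(eqr_nat R) natr_sum (eq_bigr _ (fun j _ => LE j)) -mass_axes //.
  by rewrite -(mass_supp us (axes_seq_uniq hb) out (axes_seq_out supp)) xM.
have [s sE] := balanced_perm L_two L_sum.
pose v := b \o s; pose A j := (\sum_(i < N) (v j == x i))%N.
have hv : orthonormal_basis v by move=> i j; rewrite /v /= hb (inj_eq (@perm_inj _ s)).
have A_le j : (A j <= residue_count N j)%N by rewrite /residue_count -sE leq_addr.
exists v, (residue_assign v A); split=> // [i j ij|].
  have -> : j = ord_mod d i by apply/val_inj; rewrite /= ij.
  exact: residue_assign_on_axis.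
rewrite counting_residue_assign // [RHS](axis_measureE hb supp).
rewrite -[RHS](axis_measure_perm _ _ _ s); congr axis_measure; apply: funext => j /=.
  by rewrite countingE.
by rewrite /residue_count -sE /L addKn countingE.
Qed.

Lemma E_inf_residue_config (v : 'I_d.+1 -> vec R d) (x : 'I_N -> vec R d) :
  orthonormal_basis v ->
  (forall (i : 'I_N) (j : 'I_d.+1), (i %% d.+1)%N = j -> x i = v j \/ x i = - v j) ->
  (forall i, sphere (x i)) /\
  E_inf (fun y => N%:R^-1 * counting x y) = 2^-1 * (N%:R^-1 ^+ 2 * bound).
Proof.
by move=> hv xr; have [x1 Lx] := residue_config_Lquad hv xr; rewrite E_inf_P_N // Lx.
Qed.

Lemma P_N_maximizers : (0 < N)%N -> forall w : vec R d -> R,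
  maximizes (@P_N R d N) (@E_inf R d) w <->
  exists (v : 'I_d.+1 -> vec R d) (x : 'I_N -> vec R d),
    [/\ orthonormal_basis v, (forall i, sphere (x i)),
        w = (fun y => N%:R^-1 * counting x y) &
        forall (i : 'I_N) (j : 'I_d.+1), (i %% d.+1)%N = j -> x i = v j \/ x i = - v j].
Proof.
move=> N0 w; split=> [[[x [x1 ->]] w_max]|[v [x [hv x1 -> xr]]]]; last first.
  have [_ E] := E_inf_residue_config hv xr; split; first by exists x.
  by move=> u [x' [x'1 ->]]; have [le _] := E_inf_P_N_le N0 x'1; rewrite E.
have [v0 hv0] := exists_orthonormal_basis R d.
have [|x01 E0] := @E_inf_residue_config v0 (fun i => v0 (ord_mod d i)) hv0.
  by move=> i j ij; left; congr v0; apply/val_inj.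
have [le eq] := E_inf_P_N_le N0 x1.
have ge : 2^-1 * (N%:R^-1 ^+ 2 * bound) <= E_inf (fun y => N%:R^-1 * counting x y).
  by rewrite -E0; apply: w_max; exists (fun i => v0 (ord_mod d i)).
have [v [x' [hv x'r xx']]] := axis_config_residue x1 (eq (le_anti (introT andP (conj le ge)))).
exists v, x'; split=> //; first by have [] := residue_config_Lquad hv x'r.
by rewrite xx'.
Qed.

End Residues.

Unset Implicit Arguments.

Theorem theorem1p4 (R : realType) (d : nat) (hd : (0 < d)%N) :
  (forall (N : nat), (0 < N)%N -> forall w : vec R d -> R,
     maximizes (@P_N R d N) (@E_inf R d) w <->
     exists (v : 'I_d.+1 -> vec R d) (x : 'I_N -> vec R d),
       [/\ orthonormal_basis v,
           (forall i, sphere (x i)),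
           w = (fun y => N%:R^-1 * \sum_(i < N) dirac_w (x i) y) &
           forall (i : 'I_N) (j : 'I_d.+1), (i %% d.+1)%N = j ->
             x i = v j \/ x i = - v j]) /\
  (forall w : vec R d -> R,
     maximizes (@P_fin R d) (@E_inf R d) w <->
     exists (v : 'I_d.+1 -> vec R d) (a b : 'I_d.+1 -> R),
       [/\ orthonormal_basis v,
           (forall i, 0 <= a i /\ 0 <= b i),
           (forall i, a i + b i = (d.+1)%:R^-1) &
           w = (fun y => \sum_(i < d.+1)
                   (a i * dirac_w (v i) y + b i * dirac_w (- v i) y))]).
Proof.
split; [exact: P_N_maximizers | exact: P_fin_maximizers].
Qed.
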